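(* Let $u_0\in H^1(S^1)$ and let $(\rho,\rho_t)$ be the global solution for $t\ge0$ (with $\int_0^1\rho(t,x)^2dx=1$ for all $t$) of the system $\frac{d\rho}{dt}=\rho_t$, $\frac{d\rho_t}{dt}=f(\rho,\rho_t)$, $\rho(0)=1$, $\rho_t(0)=\tfrac12u_0'$. For $t\ge0$ let $K(t,x)=\int_0^x\rho(t,y)^2dy+t\,u_0(0)-\int_0^t\int_0^\tau H(s,0)\,ds\,d\tau$ and $N(t)=\{x\in S^1: K_x(t,x)\text{ exists and equals }0\}$ (i.e. $\rho(t,x)=0$). Then for almost every $t\in\mathbb{R}_+$, $$\int_{N(t)}\rho_t(t,y)^2\,dy=0.$$
   Context: $S^1=\mathbb{R}/\mathbb{Z}$; functions on $S^1$ are $1$-periodic functions on $[0,1]$. Let $\mu=\int_0^1u_0\,dx$. For $\rho,\sigma\in L^2(S^1)$ define $$G(\rho,\sigma)(x)=\int_0^x 2\rho\sigma\,dy+\mu-\int_0^1\Big(\int_0^y 2\rho\sigma\,dz\Big)\rho(y)^2\,dy,$$ $$F(\rho,\sigma)(x)=\int_0^1\frac{\cosh\big(\big|\int_y^x\rho(z)^2dz\big|-\tfrac12\big)}{2\sinh(1/2)}\big(\rho(y)^2G(y)^2+2\sigma(y)^2\big)\,dy,\qquad f(\rho,\sigma)=\tfrac12\rho\,(G^2-F),$$ with $G=G(\rho,\sigma)$. Along the solution write $G(t,x)=G(\rho(t),\rho_t(t))(x)$ and $$H(t,x)=\int_0^x\frac{\sinh\big(\int_y^x\rho^2dz-\tfrac12\big)}{2\sinh(1/2)}(\rho^2G^2+2\rho_t^2)(y)\,dy+\int_x^1\frac{\sinh\big(-\int_y^x\rho^2dz-\tfrac12\big)}{2\sinh(1/2)}(\rho^2G^2+2\rho_t^2)(y)\,dy.$$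 *)

From mathcomp Require Import all_boot all_order all_algebra.
From mathcomp Require Import all_classical all_reals all_analysis.
Import Order.TTheory GRing.Theory Num.Theory.
Import numFieldNormedType.Exports.
Local Open Scope classical_set_scope.
Local Open Scope ring_scope.

Section Defs.
Context {R : realType}.
Local Notation mu := (@lebesgue_measure R).

Definition Int (a b : R) (g : R -> R) : R :=
  if a <= b then Rintegral mu `[a, b] g else - Rintegral mu `[b, a] g.

Definition coshR (x : R) : R := (expR x + expR (- x)) / 2.
Definition sinhR (x : R) : R := (expR x - expR (- x)) / 2.

(* G(rho,sigma)(x), with mu0 = \int_0^1 u0 *)
Definition Gop (mu0 : R) (r s : R -> R) (x : R) : R :=
  Int 0 x (fun y => 2 * r y * s y) + mu0
  - Int 0 1 (fun y => Int 0 y (fun z => 2 * r z * s z) * r y ^+ 2).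

Definition Fop (mu0 : R) (r s : R -> R) (x : R) : R :=
  Int 0 1 (fun y =>
    coshR (`|Int y x (fun z => r z ^+ 2)| - 2^-1) / (2 * sinhR 2^-1)
    * (r y ^+ 2 * Gop mu0 r s y ^+ 2 + 2 * s y ^+ 2)).

Definition fop (mu0 : R) (r s : R -> R) (x : R) : R :=
  2^-1 * r x * (Gop mu0 r s x ^+ 2 - Fop mu0 r s x).

Definition Hop (mu0 : R) (r s : R -> R) (x : R) : R :=
  Int 0 x (fun y =>
    sinhR (Int y x (fun z => r z ^+ 2) - 2^-1) / (2 * sinhR 2^-1)
    * (r y ^+ 2 * Gop mu0 r s y ^+ 2 + 2 * s y ^+ 2))
  + Int x 1 (fun y =>
    sinhR (- Int y x (fun z => r z ^+ 2) - 2^-1) / (2 * sinhR 2^-1)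
    * (r y ^+ 2 * Gop mu0 r s y ^+ 2 + 2 * s y ^+ 2)).

Definition Kfun (mu0 u00 : R) (rho rhot : R -> R -> R) (t x : R) : R :=
  Int 0 x (fun y => rho t y ^+ 2) + t * u00
  - Int 0 t (fun tau => Int 0 tau (fun s => Hop mu0 (rho s) (rhot s) 0)).

Definition Nset (mu0 u00 : R) (rho rhot : R -> R -> R) (t : R) : set R :=
  [set x | (0 <= x < 1) /\ derivable (Kfun mu0 u00 rho rhot t) x 1
           /\ derive1 (Kfun mu0 u00 rho rhot t) x = 0].

(* membership in L^2(S^1) (via the fundamental domain [0,1]) *)
Definition L2on (g : R -> R) : Prop :=
  measurable_fun `[(0:R), 1] g /\ mu.-integrable `[0, 1] (fun x => (g x ^+ 2)%:E).

Definition L2norm (g : R -> R) : R :=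
  Num.sqrt (Rintegral mu `[0, 1] (fun x => g x ^+ 2)).

(* the curve t |-> u t in L^2(S^1) has derivative du t at time t >= 0
   (one-sided at t = 0) *)
Definition L2_deriv_at (u du : R -> R -> R) (t : R) : Prop :=
  forall eps : R, 0 < eps -> exists2 d : R, 0 < d &
    forall h : R, h != 0 -> `|h| < d -> 0 <= t + h ->
      L2norm (fun x => (u (t + h) x - u t x) / h - du t x) <= eps.

End Defs.

From mathcomp Require Import all_boot all_order all_algebra.
From mathcomp Require Import all_classical all_reals all_analysis.
From mathcomp Require Import ring lra measurable_realfun.
Import Order.TTheory GRing.Theory Num.Theory.
Import numFieldNormedType.Exports.
Local Open Scope classical_set_scope.
Local Open Scope ring_scope.

(* Let m(s) = \int_0^1 |rho(s,x)| dx.  Pointwise |a + h b| >= |a| + h sg(a) b + |h| 1_{a = 0} |b|,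
   and integrating this along rho(t+h) = rho(t) + h rho_t(t) + o(h) in L^2 gives
     m(t+h) >= m(t) + h c + |h| (d(t) - o(1)),   d(t) = \int_{rho(t) = 0} |rho_t(t)|,
   so m has a strict corner at every t with d(t) > 0.  A real function has only countably many
   strict corners (each one is the unique strict minimiser of y |-> m(y) - r y on an interval,
   for some rational slope r and rational endpoints), hence d(t) = 0 for almost every t.
   Finally K_x(t,x) = rho(t,x)^2 at every Lebesgue point of rho(t)^2, so N(t) is contained in
   {rho(t) = 0} up to a null set, and there rho_t(t) vanishes a.e. as soon as d(t) = 0.
   Only the L^2-differentiability of t |-> rho(t) is used. *)

Section strict_corners.
Context {R : realType}.
Variable m : R -> R.

Definition strict_corners : set R :=
  [set t | exists c d e : R, [/\ 0 < d, 0 < e &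
     forall h, h != 0 -> `|h| < e -> m t + h * c + `|h| * d <= m (t + h)]].

Definition strict_min_on (c a b : R) : set R :=
  [set t | a < t < b /\ forall y, a < y < b -> y != t -> m t + c * (y - t) < m y].

Lemma strict_min_on_unique c a b t1 t2 :
  strict_min_on c a b t1 -> strict_min_on c a b t2 -> t1 = t2.
Proof.
move=> [t1ab min1] [t2ab min2]; apply/eqP/negPn/negP => t12.
have := min1 _ t2ab; rewrite eq_sym => /(_ t12).
have := min2 _ t1ab t12.
lra.
Qed.

Lemma countable_strict_min_on c a b : countable (strict_min_on c a b).
Proof.
have [[t mt]|no_min] := pselect (exists t, strict_min_on c a b t).
  apply: (sub_countable _ (countable1 t)); apply: subset_card_le => s ms.
  exact: strict_min_on_unique ms mt.
rewrite (_ : strict_min_on c a b = set0) //.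
by apply/seteqP; split => // s ms; apply: no_min; exists s.
Qed.

Lemma strict_corner_min_on t : strict_corners t ->
  exists q : rat * rat * rat, strict_min_on (ratr q.1.1) (ratr q.1.2) (ratr q.2) t.
Proof.
move=> [c [d [e [d0 e0 corner]]]].
have [r /[!in_itv]/= /andP[r1 r2]] : exists r : rat, ratr r \in `](c - d), (c + d)[.
  by apply: rat_in_itvoo; lra.
have [a /[!in_itv]/= /andP[a1 a2]] : exists a : rat, ratr a \in `](t - e), t[.
  by apply: rat_in_itvoo; lra.
have [b /[!in_itv]/= /andP[b1 b2]] : exists b : rat, ratr b \in `]t, (t + e)[.
  by apply: rat_in_itvoo; lra.
exists (r, a, b); split => /=; first by apply/andP.
move=> y /andP[ay yb] yt.
have /corner : y - t != 0 by rewrite subr_eq0.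
have yte : `|y - t| < e by rewrite ltr_norml; apply/andP; split; lra.
move=> /(_ yte); rewrite [t + _]addrC subrK; apply: lt_le_trans.
(* the slope r lies strictly between the one-sided slopes c - d and c + d of the corner *)
have [yt0|yt0] := ltP 0 (y - t).
  rewrite gtr0_norm //.
  have : 0 < (y - t) * (c + d - ratr r) by apply: mulr_gt0; lra.
  lra.
have yt1 : y - t < 0 by rewrite lt_neqAle yt0 andbT subr_eq0.
rewrite ltr0_norm //.
have : 0 < (y - t) * (c - d - ratr r) by rewrite nmulr_rgt0 //; lra.
lra.
Qed.

Lemma countable_strict_corners : countable strict_corners.
Proof.
pose S (q : rat * rat * rat) := strict_min_on (ratr q.1.1) (ratr q.1.2) (ratr q.2).
apply: (sub_countable (B := \bigcup_(q in setT) S q)).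
  by apply: subset_card_le => t /strict_corner_min_on [q Sq]; exists q.
by apply: bigcup_countable => // q _; exact: countable_strict_min_on.
Qed.

End strict_corners.

Lemma countable_lebesgue_negligible {R : realType} (A : set R) :
  countable A -> (@lebesgue_measure R).-negligible A.
Proof.
move=> cA; exists A; split => //; last exact: countable_lebesgue_measure0.
by apply: countable_measurable => // t; exact: measurable_set1.
Qed.

Lemma sgr_nondecreasing {R : realDomainType} : {homo (@Num.sg R) : x y / x <= y}.
Proof. by move=> x y xy; case: sgrP => x0; case: sgrP => y0 //; lra. Qed.

Lemma measurable_sgr {R : realType} {D : set R} :
  measurable D -> measurable_fun D (@Num.sg R).
Proof. by move=> mD; apply: nondecreasing_measurable => //; exact: sgr_nondecreasing. Qed.

Lemma normrD_ge_sg {R : realDomainType} (a b h : R) :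
  `|a| + h * (Num.sg a * b) + `|h| * (\1_[set 0] a * `|b|) <= `|a + h * b|.
Proof.
rewrite indicE; have [->|a0] := eqVneq a 0.
  by rewrite mem_set // sgr0 normr0 !mul0r mulr0 !add0r mul1r normrM.
rewrite memNset; last exact/eqP.
rewrite mul0r mulr0 addr0 normrEsg mulrCA -mulrDr.
by apply: le_trans (ler_norm _) _; rewrite normrM normr_sg a0 mul1r.
Qed.

Lemma measurable_indic0_norm {R : realType} {D : set R} {r v : R -> R} :
  measurable_fun D r -> measurable_fun D v ->
  measurable_fun D (fun x => \1_[set 0] (r x) * `|v x|).
Proof.
move=> mr mv; apply: measurable_funM.
  exact: (measurableT_comp (measurable_indic (D := setT) (measurable_set1 0)) mr).
exact: (measurableT_comp (@normr_measurable R setT) mv).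
Qed.

Section integral_complements.
Context {d} {T : measurableType d} {R : realType} (mu : {measure set T -> \bar R}).

(* Unlike [ge0_subset_integral], this does not ask [N] to be measurable, which N(t) is not
   known to be. *)
Lemma ge0_le_integral_subset (N D : set T) (f g : T -> \bar R) :
  (forall x, (0 <= f x)%E) -> (forall x, D x -> (0 <= g x)%E) ->
  (forall x, N x -> D x /\ (f x <= g x)%E) ->
  (\int[mu]_(x in N) f x <= \int[mu]_(x in D) g x)%E.
Proof.
move=> f0 g0 fg.
rewrite (ge0_integralE mu (fun x (_ : N x) => f0 x)) (ge0_integralE mu g0) /=.
apply: ereal_sup_le => _ [h /= hf <-]; exists h => //= x.
apply: le_trans (hf x) _; rewrite !patchE.
case: ifPn => [/set_mem Nx|_]; first by have [Dx fxg] := fg _ Nx; rewrite mem_set.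
by case: ifPn => // /set_mem Dx; exact: g0.
Qed.

Lemma ge0_Rintegral_eq0_ae {D : set T} {f : T -> R} :
  measurable D -> mu.-integrable D (EFin \o f) -> (forall x, D x -> 0 <= f x) ->
  Rintegral mu D f = 0 -> ae_eq mu D (EFin \o f) (cst 0%E).
Proof.
move=> mD intf f0 If0; apply/(ae_eq_integral_abs mu mD (measurable_int mu intf)).
rewrite (eq_integral (EFin \o f)); last by move=> x /set_mem Dx; rewrite /= ger0_norm // f0.
by rewrite -(fineK (integrable_fin_num mD intf)) -/(Rintegral mu D f) If0.
Qed.

End integral_complements.

Section unit_interval.
Context {R : realType}.
Local Notation mu := (@lebesgue_measure R).
Local Notation I01 := ([set` `[(0:R), 1]] : set R).
Local Notation "\int01 f" := (Rintegral mu I01 f) (at level 10, f at level 8).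

Let mI01 : measurable (I01 : set (measurableTypeR R)). Proof. exact: measurable_itv. Qed.

Lemma lebesgue_measure_itv01 : mu I01 = 1%E.
Proof. by rewrite lebesgue_measure_itv /= lte_fin ltr01 -EFinD subr0. Qed.

Lemma integrable_cst01 (k : R) : mu.-integrable I01 (EFin \o cst k).
Proof.
apply/integrableP; split; first exact/measurable_EFinP/measurable_cst.
rewrite (eq_integral (cst `|k|%:E)) // integral_cst //=.
by rewrite lebesgue_measure_itv01 mule1 ltry.
Qed.

Lemma integrableD01 {f g : R -> R} :
  mu.-integrable I01 (EFin \o f) -> mu.-integrable I01 (EFin \o g) ->
  mu.-integrable I01 (EFin \o (fun x => f x + g x)).
Proof.
move=> If Ig; have := integrableD mI01 If Ig.
by apply: eq_integrable => // x _; rewrite /= EFinD.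
Qed.

Lemma integrableZl01 (k : R) {f : R -> R} : mu.-integrable I01 (EFin \o f) ->
  mu.-integrable I01 (EFin \o (fun x => k * f x)).
Proof.
move=> If; have := integrableZl mI01 k If.
by apply: eq_integrable => // x _; rewrite /= EFinM.
Qed.

Lemma L2on_integrable {g : R -> R} : L2on g -> mu.-integrable I01 (EFin \o g).
Proof.
move=> [mg ig].
have := integrableD01 (f := fun x => g x ^+ 2) ig (integrable_cst01 1).
apply: le_integrable => //.
  exact/measurable_EFinP.
have sqr_bound (y : R) : `|y| <= `|y ^+ 2 + 1|.
  rewrite [leRHS]ger0_norm ?addr_ge0 ?sqr_ge0 // -real_normK ?num_real //.
  have := sqr_ge0 (`|y| - 1); have := normr_ge0 y; nra.
by move=> x _; rewrite /= lee_fin sqr_bound.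
Qed.

Lemma integrable_le_L2on {f g : R -> R} : measurable_fun I01 f -> L2on g ->
  (forall x, `|f x| <= `|g x|) -> mu.-integrable I01 (EFin \o f).
Proof.
move=> mf Lg fg; apply: (le_integrable mI01 _ _ (L2on_integrable Lg)).
  exact/measurable_EFinP.
by move=> x _; rewrite /= lee_fin.
Qed.

Lemma integrable01_norm {f : R -> R} :
  L2on f -> mu.-integrable I01 (EFin \o (fun x => `|f x|)).
Proof. by move=> Lf; exact: integrable_norm (L2on_integrable Lf). Qed.

Lemma L2onD {f g : R -> R} : L2on f -> L2on g -> L2on (fun x => f x + g x).
Proof.
move=> [mf f2] [mg g2]; split; first exact: measurable_funD.
have := integrableD01 (integrableZl01 2 (f := fun x => f x ^+ 2) f2)
  (integrableZl01 2 (f := fun x => g x ^+ 2) g2).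
apply: le_integrable => //.
  by apply/measurable_EFinP; apply: measurable_funX; exact: measurable_funD.
have sqr_addr_le (a b : R) : `|(a + b) ^+ 2| <= `|2 * a ^+ 2 + 2 * b ^+ 2|.
  have a2 := sqr_ge0 a; have b2 := sqr_ge0 b.
  rewrite ger0_norm ?sqr_ge0 // ger0_norm; last by lra.
  by have := sqr_ge0 (a - b); rewrite !expr2; nra.
by move=> x _; rewrite /= lee_fin sqr_addr_le.
Qed.

Lemma L2onZ (k : R) {f : R -> R} : L2on f -> L2on (fun x => k * f x).
Proof.
move=> [mf f2]; split; first exact: measurable_funM.
have := integrableZl01 (k ^+ 2) (f := fun x => f x ^+ 2) f2.
by apply: eq_integrable => // x _; rewrite /= exprMn.
Qed.

Lemma Rintegral01_norm_le (f : R -> R) (eta : R) :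
  L2on f -> 0 < eta -> L2norm f <= eta -> \int01 (fun x => `|f x|) <= eta.
Proof.
move=> Lf eta0 fe.
have if2 : mu.-integrable I01 (EFin \o (fun x => f x ^+ 2)) by case: Lf.
have f2_le : \int01 (fun x => f x ^+ 2) <= eta ^+ 2.
  have f2_ge0 : 0 <= \int01 (fun x => f x ^+ 2).
    by apply: Rintegral_ge0 => x _; exact: sqr_ge0.
  by rewrite -(sqr_sqrtr f2_ge0) !expr2; apply: ler_pM; rewrite ?sqrtr_ge0.
have amgm x : `|f x| <= (2 * eta)^-1 * f x ^+ 2 + eta / 2.
  have : 0 <= (2 * eta)^-1 * (`|f x| - eta) ^+ 2.
    by rewrite mulr_ge0 ?sqr_ge0 ?invr_ge0 //; lra.
  rewrite -[f x ^+ 2]real_normK ?num_real //.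
  have -> : (2 * eta)^-1 * (`|f x| - eta) ^+ 2
            = (2 * eta)^-1 * `|f x| ^+ 2 + eta / 2 - `|f x| by field; lra.
  lra.
apply: le_trans (le_Rintegral mI01 (integrable01_norm Lf) _ (fun x _ => amgm x)) _.
  exact: integrableD01 (integrableZl01 _ if2) (integrable_cst01 _).
have mu01 : fine (mu I01) = 1 by rewrite lebesgue_measure_itv01.
rewrite RintegralD //; last 2 first.
- exact: integrableZl01.
- exact: integrable_cst01.
rewrite Rintegral_cst // mu01 mulr1 (RintegralZl _ mI01 if2).
have : (2 * eta)^-1 * \int01 (fun x => f x ^+ 2) <= (2 * eta)^-1 * eta ^+ 2.
  by rewrite ler_wpM2l ?invr_ge0 //; lra.
have -> : (2 * eta)^-1 * eta ^+ 2 = eta / 2 by field; lra.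
lra.
Qed.

Lemma integrable01_indic0_norm {r v : R -> R} : L2on r -> L2on v ->
  mu.-integrable I01 (EFin \o (fun x => \1_[set 0] (r x) * `|v x|)).
Proof.
move=> Lr Lv; apply: (integrable_le_L2on (measurable_indic0_norm Lr.1 Lv.1) Lv) => x.
by rewrite normrM normr_id ler_piMl // indicE; case: (_ \in _); rewrite ?normr0 ?normr1.
Qed.

Lemma Rintegral01_normD_ge_sg {r v : R -> R} (h : R) : L2on r -> L2on v ->
  \int01 (fun x => `|r x|) + h * \int01 (fun x => Num.sg (r x) * v x)
    + `|h| * \int01 (fun x => \1_[set 0] (r x) * `|v x|)
  <= \int01 (fun x => `|r x + h * v x|).
Proof.
move=> Lr Lv.
have isgv : mu.-integrable I01 (EFin \o (fun x => Num.sg (r x) * v x)).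
  apply: (integrable_le_L2on _ Lv) => [|x].
    apply: (measurable_funM _ Lv.1).
    exact: (measurableT_comp (measurable_sgr measurableT) Lr.1).
  by rewrite normrM ler_piMl // normr_sg; case: (r x != 0).
have izero := integrable01_indic0_norm Lr Lv.
have iabs := integrable01_norm Lr.
have iB := integrableZl01 h isgv; have iC := integrableZl01 `|h| izero.
have := le_Rintegral mI01 (integrableD01 (integrableD01 iabs iB) iC)
  (integrable01_norm (L2onD Lr (L2onZ h Lv))) (fun x _ => normrD_ge_sg (r x) (v x) h).
rewrite (RintegralD mI01 (integrableD01 iabs iB) iC) (RintegralD mI01 iabs iB).
by rewrite !RintegralZl.
Qed.

Lemma Rintegral01_norm_first_order_le {r0 r1 v : R -> R} {h eta : R} :
  L2on r0 -> L2on r1 -> L2on v -> h != 0 -> 0 < eta ->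
  L2norm (fun x => (r1 x - r0 x) / h - v x) <= eta ->
  \int01 (fun x => `|r0 x + h * v x|) <= \int01 (fun x => `|r1 x|) + `|h| * eta.
Proof.
move=> L0 L1 Lv h0 eta0 small.
pose e x := (r1 x - r0 x) / h - v x.
have Le : L2on e.
  have -> : e = fun x => h^-1 * r1 x + (- h^-1) * r0 x + (-1) * v x.
    by apply/funext => x; rewrite /e; field.
  exact: L2onD (L2onD (L2onZ _ L1) (L2onZ _ L0)) (L2onZ _ Lv).
have ie := integrableZl01 `|h| (integrable01_norm Le).
have triangle x : `|r0 x + h * v x| <= `|r1 x| + `|h| * `|e x|.
  have -> : r0 x + h * v x = r1 x - h * e x by rewrite /e; field.
  by rewrite -normrM ler_normB.
apply: le_trans (le_Rintegral mI01 (integrable01_norm (L2onD L0 (L2onZ h Lv)))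
  (integrableD01 (integrable01_norm L1) ie) (fun x _ => triangle x)) _.
rewrite (RintegralD mI01 (integrable01_norm L1) ie) RintegralZl ?lerD2l //.
  by rewrite ler_wpM2l // Rintegral01_norm_le.
exact: integrable01_norm.
Qed.

Lemma strict_corner_L1norm {u du : R -> R -> R} {t : R} :
  0 < t -> (forall s, 0 <= s -> L2on (u s)) -> L2on (du t) -> L2_deriv_at u du t ->
  0 < \int01 (fun x => \1_[set 0] (u t x) * `|du t x|) ->
  strict_corners (fun s => \int01 (fun x => `|u s x|)) t.
Proof.
move=> t0 Lu Ldu Du; set d := \int01 _ => d0.
have d20 : 0 < d / 2 by rewrite divr_gt0.
have [del del0 Hdel] := Du _ d20.
exists (\int01 (fun x => Num.sg (u t x) * du t x)), (d / 2), (Num.min del t).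
split => //; first by rewrite lt_min del0.
move=> h h0; rewrite lt_min => /andP[hdel ht].
have th : 0 <= t + h by move: ht; rewrite ltr_norml; lra.
have Lt := Lu t (ltW t0).
have := Rintegral01_normD_ge_sg h Lt Ldu.
have := Rintegral01_norm_first_order_le Lt (Lu _ th) Ldu h0 d20 (Hdel h h0 hdel th).
have : `|h| * d = `|h| * (d / 2) + `|h| * (d / 2) by rewrite -mulrDr -splitr.
rewrite -/d /=; lra.
Qed.

Lemma derive1_Int0_lebesgue_pt (f : R -> R) (C x : R) :
  mu.-integrable I01 (EFin \o f) -> 0 < x < 1 -> lebesgue_pt (f \_ I01) x ->
  derive1 (fun y => Int 0 y f + C) x = f x.
Proof.
move=> intf /andP[x0 x1] lpt.
have intg : mu.-integrable I01 (EFin \o f \_ I01).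
  apply: eq_integrable intf => // y y01.
  by rewrite /= patchE y01.
have [|dF DF] := FTC1_lebesgue_pt x1 intg _ lpt; first by rewrite /= lte_fin.
set F := (fun y => _) in dF DF.
have FC : \forall y \near x, (F + cst C) y = Int 0 y f + C.
  near=> y.
  have : y \in `]0, 1[ by near: y; apply: near_in_itvoo; rewrite in_itv /= x0 x1.
  rewrite in_itv /= => /andP[y0 y1]; rewrite /Int (ltW y0); congr (_ + _).
  apply: eq_Rintegral => z; rewrite inE /= in_itv /= => /andP[z0 zy].
  by rewrite patchE mem_set //= in_itv /= z0 (le_trans zy (ltW y1)).
have dF' : is_derive x 1 F (f \_ I01 x) by apply: DeriveDef => //; rewrite -derive1E.
have dFC := is_deriveD dF' (is_derive_cst C x 1).
rewrite derive1E -(near_eq_derive (1 : R) FC) derive_val addr0 patchE mem_set //=.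
by rewrite in_itv /= !ltW.
Unshelve. all: by end_near.
Qed.

Lemma negligible_Nset_nonzero (mu0 u00 : R) (rho rhot : R -> R -> R) (t : R) :
  L2on (rho t) -> mu.-negligible [set x | Nset mu0 u00 rho rhot t x /\ rho t x != 0].
Proof.
move=> [_ ir]; set g := fun y => rho t y ^+ 2.
have intT : mu.-integrable setT (EFin \o g \_ I01).
  by rewrite -restrict_EFin; apply/integrable_restrict => //=; rewrite setTI.
have [E [mE E0 lptE]] := lebesgue_differentiation (open_integrable_locally openT intT).
apply: (@negligibleS _ _ _ mu (E `|` [set 0])); last first.
  by apply: negligibleU; [exists E; split | exact: countable_lebesgue_negligible].
move=> x [[/andP[x_ge0 x1] [_ DK]] rx].
have [->|xn0] := eqVneq x 0; [by right | left].
have x0 : 0 < x by rewrite lt_neqAle eq_sym xn0.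
apply: lptE => lpt; move/negP: rx; apply; rewrite -sqrf_eq0.
have <- : derive1 (Kfun mu0 u00 rho rhot t) x = rho t x ^+ 2.
  apply: eq_trans (derive1_Int0_lebesgue_pt g _ x ir _ lpt); last by apply/andP.
  by congr derive1; apply/funext => y; rewrite /Kfun -addrA.
by rewrite DK.
Qed.

Lemma Nset_integral_eq0 (mu0 u00 : R) (rho rhot : R -> R -> R) (t : R) :
  L2on (rho t) -> L2on (rhot t) ->
  \int01 (fun x => \1_[set 0] (rho t x) * `|rhot t x|) = 0 ->
  (\int[mu]_(y in Nset mu0 u00 rho rhot t) (rhot t y ^+ 2)%:E = 0)%E.
Proof.
move=> L0 Lv; set w := fun x => \1_[set 0] (rho t x) * `|rhot t x| => w_eq0.
have w_ge0 x : 0 <= w x by rewrite mulr_ge0 // indicE.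
have iw : mu.-integrable I01 (EFin \o w) := integrable01_indic0_norm L0 Lv.
have w_ae0 := ge0_Rintegral_eq0_ae mu mI01 iw (fun x _ => w_ge0 x) w_eq0.
have [A [mA A0 NA]] := negligible_Nset_nonzero mu0 u00 rho rhot t L0.
(* g dominates rhot(t)^2 on N(t) (off A, rho(t) = 0 so that w = |rhot(t)|) and vanishes a.e. *)
pose g x := w x * `|rhot t x| + \1_A x * rhot t x ^+ 2.
have mg : measurable_fun I01 g.
  apply: measurable_funD; apply: measurable_funM.
  - exact: measurable_indic0_norm L0.1 Lv.1.
  - exact: (measurableT_comp (@normr_measurable R setT) Lv.1).
  - exact: measurable_indic.
  - exact: measurable_funX Lv.1.
have g_ae0 : ae_eq mu I01 (EFin \o g) (cst 0%E).
  have nA : mu.-negligible A by exists A; split.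
  apply: negligibleS (negligibleU w_ae0 nA).
  move=> x /= /not_implyP [I01x gx0]; have [Ax|nAx] := pselect (A x); [by right | left].
  move=> /(_ I01x) [wx0]; apply: gx0.
  by rewrite /g wx0 indicE memNset // !mul0r addr0.
apply/eqP; rewrite eq_le integral_ge0 ?andbT; last by move=> x _; rewrite lee_fin sqr_ge0.
apply: le_trans (ge0_le_integral_subset mu _ I01 _ (EFin \o g) _ _ _) _.
- by move=> x; rewrite lee_fin sqr_ge0.
- move=> x _; rewrite lee_fin.
  by apply: addr_ge0; apply: mulr_ge0; rewrite ?w_ge0 ?sqr_ge0 ?indicE.
- move=> x Nx; split; first by case: Nx => /andP[x0 x1] _; rewrite /= in_itv /= x0 ltW.
  rewrite lee_fin /g indicE; have [Ax|nAx] := pselect (A x).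
    by rewrite mem_set // mul1r lerDr; exact: mulr_ge0 (w_ge0 x) (normr_ge0 _).
  have rx : rho t x = 0 by apply/eqP; apply: contrapT => /negP rx; exact/nAx/NA.
  rewrite memNset // mul0r addr0 /w rx indicE mem_set // mul1r.
  by rewrite -normrM -expr2 ger0_norm ?sqr_ge0.
rewrite (ae_eq_integral (cst 0%E) _ mI01 _ _ g_ae0) ?integral0 //.
exact/measurable_EFinP.
Qed.

End unit_interval.

Theorem lemma8 (R : realType) (u0 du0 : R -> R) (rho rhot : R -> R -> R) :
  (* u0 in H^1(S^1), with weak derivative du0 in L^2 *)
  (forall x, u0 (x + 1) = u0 x) ->
  L2on du0 ->
  (forall x, x \in `[0, 1] -> u0 x = u0 0 + Int 0 x du0) ->
  (* (rho, rho_t) : [0,oo) -> L^2(S^1) x L^2(S^1) *)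
  (forall t x, 0 <= t -> rho t (x + 1) = rho t x /\ rhot t (x + 1) = rhot t x) ->
  (forall t, 0 <= t -> L2on (rho t) /\ L2on (rhot t)) ->
  (* the ODE system, for all t >= 0 *)
  (forall t, 0 <= t -> L2_deriv_at rho rhot t) ->
  (forall t, 0 <= t ->
     L2_deriv_at rhot (fun s => fop (Int 0 1 u0) (rho s) (rhot s)) t) ->
  (* initial data *)
  {ae (@lebesgue_measure R), forall x, x \in `[0, 1] -> rho 0 x = 1} ->
  {ae (@lebesgue_measure R), forall x, x \in `[0, 1] -> rhot 0 x = 2^-1 * du0 x} ->
  (* conservation of the L^2 norm *)
  (forall t, 0 <= t -> Int 0 1 (fun x => rho t x ^+ 2) = 1) ->
  {ae (@lebesgue_measure R), forall t : R, (0 <= t)%R ->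
     (\int[@lebesgue_measure R]_(y in Nset (Int 0%R 1%R u0) (u0 0%R) rho rhot t)
        ((rhot t y ^+ 2)%R%:E))%E = 0%E}.
Proof.
move=> _ _ _ _ L2sol Drho _ _ _ _.
pose m s := Rintegral (@lebesgue_measure R) ([set` `[(0:R), 1]] : set R)
  (fun x => `|rho s x|).
apply: (@negligibleS _ _ _ (@lebesgue_measure R) ([set 0] `|` strict_corners m)); last first.
  apply: negligibleU; apply: countable_lebesgue_negligible => //.
  exact: countable_strict_corners.
move=> t /not_implyP [t_ge0 Nt_neq0]; have [->|t_neq0] := eqVneq t 0; [by left | right].
have t_gt0 : 0 < t by rewrite lt_neqAle eq_sym t_neq0.
have [Lrho Lrhot] := L2sol t t_ge0.
apply: (strict_corner_L1norm t_gt0 (fun s s0 => (L2sol s s0).1) Lrhot (Drho t t_ge0)).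
rewrite lt_neqAle Rintegral_ge0 ?andbT; last by move=> x _; rewrite mulr_ge0 // indicE.
by apply: contra_notN Nt_neq0 => /eqP/esym; exact: Nset_integral_eq0.
Qed.
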